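(* (i) For any $N\in\mathbb{N}$ and $k\in\mathbb{Z}_+$, $$\gamma_N^{-(N-2),k}=2^k\Bigl(\frac N2+k-2\Bigr)_k(N+k-3)_k.$$ (ii) For any $k\in\mathbb{N}$, $\ell_2^k=2^{k-1}((k-1)!)^2$.
   Context: $|x|_N$ is the Euclidean norm on $\mathbb{R}^N$, $\log$ the natural logarithm, $I_N=\{1,\ldots,N\}$, $D_i=\partial_{x_{i_1}}\cdots\partial_{x_{i_k}}$ for $i=(i_1,\ldots,i_k)\in I_N^k$, and $|\nabla_N^k u(x)|_{N^k}=\bigl(\sum_{i\in I_N^k}(D_iu(x))^2\bigr)^{1/2}$ (for $k=0$ this is $|u(x)|$). It is known that for $k\in\mathbb{Z}_+$, $s\in\mathbb{R}$ the function $x\mapsto(|x|_N^{k-s}|\nabla_N^k[|x|_N^s]|_{N^k})^2$ is constant on $\mathbb{R}^N\setminus\{0\}$; its value is denoted $\gamma_N^{s,k}$. For $k\in\mathbb{N}$ the function $x\mapsto(|x|_N^{k}|\nabla_N^k[\log|x|_N]|_{N^k})^2$ is constant on $\mathbb{R}^N\setminus\{0\}$, with value $\ell_N^k$. $(\nu)_k=\prod_{j=0}^{k-1}(\nu-j)$ for $k\in\mathbb{N}$, $(\nu)_0=1$. *)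

From HB Require Import structures.
From mathcomp Require Import all_boot all_order all_algebra.
From mathcomp Require Import all_classical all_reals all_analysis.
Set Implicit Arguments. Unset Strict Implicit. Unset Printing Implicit Defensive.
Import Order.TTheory GRing.Theory Num.Theory.
Import numFieldNormedType.Exports.
Local Open Scope ring_scope.

Section Defs.
Variable R : realType.

Definition enorm (N : nat) (x : 'rV[R]_N) : R :=
  Num.sqrt (\sum_(j < N) (x ord0 j) ^+ 2).

Definition evec (N : nat) (j : 'I_N) : 'rV[R]_N := delta_mx ord0 j.

Definition pder (N : nat) (j : 'I_N) (u : 'rV[R]_N -> R) : 'rV[R]_N -> R :=
  fun x => 'D_(evec j) u x.

Definition Dmulti (N : nat) (i : seq 'I_N) (u : 'rV[R]_N -> R) : 'rV[R]_N -> R :=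
  foldr (@pder N) u i.

Definition gradk_sq (N k : nat) (u : 'rV[R]_N -> R) (x : 'rV[R]_N) : R :=
  \sum_(i : k.-tuple 'I_N) (Dmulti (tval i) u x) ^+ 2.

Definition gradk_norm (N k : nat) (u : 'rV[R]_N -> R) (x : 'rV[R]_N) : R :=
  Num.sqrt (gradk_sq k u x).

(* the function x |-> (|x|^(k-s) |nabla^k [|x|^s]|)^2, whose constant
   value on R^N \ {0} is gamma_N^{s,k} *)
Definition gamma_fun (N : nat) (s : R) (k : nat) (x : 'rV[R]_N) : R :=
  ((enorm x) `^ (k%:R - s) * gradk_norm k (fun y => (enorm y) `^ s) x) ^+ 2.

(* the function x |-> (|x|^k |nabla^k [log |x|]|)^2, whose constant value
   on R^N \ {0} is ell_N^k *)
Definition ell_fun (N : nat) (k : nat) (x : 'rV[R]_N) : R :=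
  ((enorm x) ^+ k * gradk_norm k (fun y => ln (enorm y)) x) ^+ 2.

Definition falling (nu : R) (k : nat) : R := \prod_(j < k) (nu - j%:R).

End Defs.

From mathcomp Require Import all_boot all_order all_algebra.
From mathcomp Require Import all_classical all_reals all_analysis.
From mathcomp Require Import ring.
Import Order.TTheory GRing.Theory Num.Theory.
Import numFieldNormedType.Exports.
Local Open Scope ring_scope.
Local Open Scope classical_set_scope.
Set Implicit Arguments. Unset Strict Implicit.

(* If u is harmonic on R^N \ {0}, then so is every derivative D_i u, and
   summing Delta (v^2) = 2 |grad v|^2 + 2 v Delta v over v = D_i u, i in I_N^k,
   gives |grad^(k+1) u|^2 = 1/2 Delta (|grad^k u|^2).  For u = |x|^(2-N), and
   for u = log |x| when N = 2, induction on k then shows that |grad^k u|^2 is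
   a multiple c_k |x|^(2p) of a power of |x|, and
   Delta (|x|^(2p)) = 2p (N + 2p - 2) |x|^(2p-2) gives the recursion for c_k
   whose solution is the closed form of the statement.
   Derivatives are computed on a language of terms closed under partial
   differentiation, whose syntactic derivative makes partial derivatives
   commute without appealing to Schwarz's theorem. *)

Section LineDerivative.
Variables (R : realType) (V : normedModType R).

Lemma deriveEline (W : normedModType R) (f : V -> W) x v :
  'D_v f x = 'D_1 (fun h : R => f (h *: v + x)) 0.
Proof.
rewrite /derive; suff -> : (fun h : R => h^-1 *: ((f \o shift x) (h *: v) - f x)) =
    (fun h : R => h^-1 *: (((fun h' : R => f (h' *: v + x)) \o shift 0) h%:A
                           - f (0 *: v + x))) by [].
by rewrite funeqE => h /=; rewrite addr0 scale0r add0r [_%:A]mulr1.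
Qed.

Lemma is_derive_line (W : normedModType R) (f : V -> W) x v df :
  is_derive (0 : R) 1 (fun h : R => f (h *: v + x)) df -> is_derive x v f df.
Proof.
by move=> [fd <-]; split; [exact/derivable1P | rewrite deriveEline].
Qed.

Lemma is_derive_comp (f : V -> R) (g : R -> R) x v df dg :
  is_derive x v f df -> is_derive (f x) 1 g dg ->
  is_derive x v (g \o f) (dg * df).
Proof.
move=> [fd fv] [gd gv]; set p := fun h : R => f (h *: v + x).
have p0 : p 0 = f x by rewrite /p scale0r add0r.
have pd : derivable p 0 1 := (derivable1P f x v).1 fd.
have gd' : derivable g (p 0) 1 := ecast a (derivable g a 1) (esym p0) gd.
have gpd : derivable (g \o p) 0 1.
  apply/derivable1_diffP; apply: (differentiable_comp (f := p) (g := g)).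
    exact: (derivable1_diffP p 0).1 pd.
  exact: (derivable1_diffP g (p 0)).1 gd'.
split; first by apply/(derivable1P _ x v).
have := derive1_comp pd gd'; rewrite !derive1E p0 gv => comp_gp.
by rewrite deriveEline [LHS]comp_gp -fv (deriveEline f).
Qed.

Lemma nbhs_neq0 (x : V) : x != 0 -> \forall y \near x, y != 0.
Proof.
move=> x0; have : open [set y : V | y != 0].
  rewrite (_ : [set y | y != 0] = ~` [set 0]).
    exact/closed_openC/accessible_closed_set1/hausdorff_accessible/norm_hausdorff.
  by apply/seteqP; split => y /=; move/eqP.
by move=> op; exact: (open_nbhs_nbhs (conj op x0)).
Qed.

End LineDerivative.

Section SquaredNorm.
Variables (R : realType) (N : nat).
Local Notation V := 'rV[R]_N.

Definition sqnorm (y : V) : R := \sum_(i < N) y ord0 i ^+ 2.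

Lemma sqnorm_ge0 y : 0 <= sqnorm y.
Proof. by apply: sumr_ge0 => i _; exact: sqr_ge0. Qed.

Lemma sqnorm_gt0 y : y != 0 -> 0 < sqnorm y.
Proof.
move=> y0; rewrite lt_neqAle sqnorm_ge0 andbT eq_sym.
rewrite psumr_eq0; last by move=> i _; exact: sqr_ge0.
apply: contra y0 => /allP y0; apply/eqP/rowP => i.
by have := y0 i (mem_index_enum _); rewrite /= sqrf_eq0 mxE => /eqP.
Qed.

Lemma sqnorm_mul_pow y a : y != 0 -> sqnorm y * sqnorm y `^ (a - 1) = sqnorm y `^ a.
Proof.
move=> y0; have qy := sqnorm_gt0 y0.
rewrite -{1}(powRr1 (ltW qy)) -powRD ?subrKC //.
by apply/implyP => _; rewrite gt_eqF.
Qed.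

Lemma enorm_sqnorm y : enorm y = sqnorm y `^ 2^-1.
Proof. by rewrite powR12_sqrt ?sqnorm_ge0. Qed.

Lemma is_derive_coord (x v : V) i : is_derive x v (fun y : V => y ord0 i) (v ord0 i).
Proof.
apply: is_derive_line.
have -> : (fun h : R => (h *: v + x) ord0 i) = (fun h => h * v ord0 i + x ord0 i).
  by rewrite funeqE => h; rewrite !mxE.
by apply: is_derive_eq; rewrite scaler0 add0r addr0 [_%:A]mulr1.
Qed.

Lemma is_derive_sqnorm x j : is_derive x (evec R j) sqnorm (2 * x ord0 j).
Proof.
have -> : sqnorm = \sum_(i < N) (fun y : V => y ord0 i) ^+ 2.
  by rewrite fct_sumE funeqE => y; apply: eq_bigr => i _; rewrite exprfctE.
apply: is_derive_eq; first by apply: is_derive_sum => i; apply/is_deriveX/is_derive_coord.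
rewrite (bigD1 j) //= big1 ?addr0 => [|i /negPf ij].
  by rewrite /evec mxE !eqxx expr1 [_ *: _]mulr1.
by rewrite /evec mxE ij andbF scaler0.
Qed.

End SquaredNorm.

Section Terms.
Variables (R : realType) (N : nat).
Local Notation V := 'rV[R]_N.

Inductive term : Type :=
| TCst of R
| TCoord of 'I_N
| TPow of R
| TLog
| TAdd of term & term
| TMul of term & term.

Fixpoint eval (e : term) (y : V) : R :=
  match e with
  | TCst c => c
  | TCoord i => y ord0 i
  | TPow a => sqnorm y `^ a
  | TLog => ln (sqnorm y)
  | TAdd a b => eval a y + eval b y
  | TMul a b => eval a y * eval b y
  end.

Fixpoint dterm (j : 'I_N) (e : term) : term :=
  match e with
  | TCst _ => TCst 0
  | TCoord i => TCst (i == j)%:R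
  | TPow a => TMul (TCst (2 * a)) (TMul (TCoord j) (TPow (a - 1)))
  | TLog => TMul (TCst 2) (TMul (TCoord j) (TPow (-1)))
  | TAdd a b => TAdd (dterm j a) (dterm j b)
  | TMul a b => TAdd (TMul (dterm j a) b) (TMul a (dterm j b))
  end.

Lemma is_derive_eval e x j :
  x != 0 -> is_derive x (evec R j) (eval e) (eval (dterm j e) x).
Proof.
move=> x0; have qx := sqnorm_gt0 x0.
elim: e => [c|i|a||a IHa b IHb|a IHa b IHb] /=.
- exact: is_derive_cst.
- by have := is_derive_coord x (evec R j) i; rewrite /evec mxE eqxx.
- apply: is_derive_eq.
    exact: (is_derive_comp (is_derive_sqnorm x j) (is_derive1_powR a qx)).
  by rewrite /=; ring.
- apply: is_derive_eq.
    exact: (is_derive_comp (is_derive_sqnorm x j) (is_derive1_ln qx)).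
  by rewrite /= powR_inv1 ?sqnorm_ge0 //; ring.
- exact: is_deriveD.
- by apply: is_derive_eq; rewrite -![_ *: _]/(_ * _); ring.
Qed.

Lemma pder_eval e j x : x != 0 -> pder j (eval e) x = eval (dterm j e) x.
Proof. by move=> x0; rewrite /pder; have [_ ->] := is_derive_eval e j x0. Qed.

Definition eq_off0 (f g : V -> R) := forall y : V, y != 0 -> f y = g y.

Lemma pder_eq_off0 (f g : V -> R) j x :
  x != 0 -> eq_off0 f g -> pder j f x = pder j g x.
Proof.
move=> x0 fg; rewrite /pder; apply: near_eq_derive.
by near=> y; apply: fg; near: y; exact: (nbhs_neq0 x0).
Unshelve. all: by end_near.
Qed.

Lemma dterm_eq_off0 e1 e2 j :
  eq_off0 (eval e1) (eval e2) -> eq_off0 (eval (dterm j e1)) (eval (dterm j e2)).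
Proof. by move=> e12 x x0; rewrite -!pder_eval //; exact: pder_eq_off0. Qed.

Definition dterms (t : seq 'I_N) (e : term) : term := foldr dterm e t.

Lemma dterms_eq_off0 e1 e2 t :
  eq_off0 (eval e1) (eval e2) -> eq_off0 (eval (dterms t e1)) (eval (dterms t e2)).
Proof. by elim: t => [|j t IH] //= e12; apply/dterm_eq_off0/IH. Qed.

Lemma Dmulti_eval e t x : x != 0 -> Dmulti t (eval e) x = eval (dterms t e) x.
Proof.
elim: t x => [|j t IH] x x0 //=.
by rewrite -pder_eval //; apply: pder_eq_off0 => // y y0; exact: IH.
Qed.

Lemma dtermC e i j y : eval (dterm i (dterm j e)) y = eval (dterm j (dterm i e)) y.
Proof.
elim: e => [c|k|a||a IHa b IHb|a IHa b IHb] /=; rewrite 1?eq_sym; try ring.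
- by rewrite IHa IHb.
- by rewrite IHa IHb; ring.
Qed.

Lemma dterm_dterms e t j :
  eq_off0 (eval (dterm j (dterms t e))) (eval (dterms t (dterm j e))).
Proof. by elim: t => [|i t IH] //= y y0; rewrite dtermC; exact: dterm_eq_off0. Qed.

Definition tsum (l : seq term) : term := foldr TAdd (TCst 0) l.

Lemma eval_tsum l y : eval (tsum l) y = \sum_(e <- l) eval e y.
Proof. by elim: l => [|e l IH] /=; rewrite ?big_nil ?big_cons ?IH. Qed.

Lemma dterm_tsum l j : dterm j (tsum l) = tsum (map (dterm j) l).
Proof. by elim: l => //= e l ->. Qed.

Lemma dterms_tsum l t : dterms t (tsum l) = tsum (map (dterms t) l).
Proof.
elim: t l => [|j t IH] l /=; first by rewrite map_id.
by rewrite IH dterm_tsum -map_comp.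
Qed.

Lemma dterms_cst0 t : eq_off0 (eval (dterms t (TCst 0))) (fun _ => 0).
Proof.
elim: t => [|j t IH] //= y y0.
exact: (@dterm_eq_off0 _ (TCst 0) j IH y y0).
Qed.

Definition laplacian (e : term) (y : V) : R :=
  \sum_(j < N) eval (dterm j (dterm j e)) y.

Definition harmonic (e : term) := eq_off0 (laplacian e) (fun _ => 0).

(* Commute [dterms t] with the Laplacian, whose term vanishes near every y != 0. *)
Lemma harmonic_dterms e t : harmonic e -> harmonic (dterms t e).
Proof.
move=> He y y0; rewrite /laplacian.
under eq_bigr => j _.
  rewrite (dterm_eq_off0 j (@dterm_dterms e t j) y0) (@dterm_dterms _ t j y y0).
over.
pose L := tsum [seq dterm j (dterm j e) | j <- index_enum 'I_N].
have L0 : eq_off0 (eval L) (eval (TCst 0)).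
  by move=> z z0; rewrite eval_tsum big_map; exact: He.
have := dterms_eq_off0 t L0 y0; rewrite dterms_tsum eval_tsum -map_comp big_map => ->.
exact: dterms_cst0.
Qed.

Lemma laplacian_scale c e y : laplacian (TMul (TCst c) e) y = c * laplacian e y.
Proof. by rewrite /laplacian mulr_sumr; apply: eq_bigr => j _ /=; ring. Qed.

Lemma laplacian_pow p x :
  x != 0 -> laplacian (TPow p) x = 2 * p * (N%:R + 2 * p - 2) * sqnorm x `^ (p - 1).
Proof.
move=> x0; rewrite /laplacian.
have second_pder j : eval (dterm j (dterm j (TPow p))) x =
    2 * p * sqnorm x `^ (p - 1)
    + 2 * p * (2 * (p - 1)) * sqnorm x `^ (p - 1 - 1) * x ord0 j ^+ 2.
  by rewrite /= eqxx mulr1n; ring.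
under eq_bigr => j _ do rewrite second_pder.
rewrite big_split /= sumr_const card_ord -mulr_sumr -/(sqnorm x).
by rewrite -(sqnorm_mul_pow (p - 1) x0) -mulr_natr; ring.
Qed.

Lemma laplacian_log x :
  x != 0 -> laplacian TLog x = 2 * (N%:R - 2) * sqnorm x `^ (-1).
Proof.
move=> x0; rewrite /laplacian.
have second_pder j : eval (dterm j (dterm j TLog)) x =
    2 * sqnorm x `^ (-1) - 4 * sqnorm x `^ (-1 - 1) * x ord0 j ^+ 2.
  by rewrite /= eqxx mulr1n; ring.
under eq_bigr => j _ do rewrite second_pder.
rewrite big_split /= sumr_const card_ord sumrN -mulr_sumr -/(sqnorm x).
by rewrite -(sqnorm_mul_pow (-1) x0) -mulr_natr; ring.
Qed.

Lemma harmonic_fundamental : harmonic (TPow (- (N%:R - 2) / 2)).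
Proof.
by move=> y y0; rewrite laplacian_pow // (_ : _ + _ - 2 = 0) ?mulr0 ?mul0r //; field.
Qed.

Lemma sum_tuple0 (F : 0.-tuple 'I_N -> R) : \sum_(t : 0.-tuple 'I_N) F t = F [tuple].
Proof.
rewrite (eq_bigl (pred1 [tuple])) ?big_pred1_eq // => t.
by rewrite [t]tuple0; apply/esym/eqP.
Qed.

Lemma sum_tupleS k (F : seq 'I_N -> R) :
  \sum_(t : k.+1.-tuple 'I_N) F t = \sum_(j < N) \sum_(t : k.-tuple 'I_N) F (j :: t).
Proof.
rewrite pair_big /=.
rewrite (reindex (fun p : 'I_N * k.-tuple 'I_N => cons_tuple p.1 p.2)) //=.
exists (fun t : k.+1.-tuple 'I_N => (thead t, behead_tuple t)).
  by move=> [j t] _ /=; rewrite theadE; congr pair; apply: val_inj.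
by move=> t _; rewrite [RHS](tuple_eta t); apply: val_inj.
Qed.

Definition gradsq (k : nat) (e : term) (y : V) : R :=
  \sum_(t : k.-tuple 'I_N) eval (dterms t e) y ^+ 2.

Lemma gradk_sq_eval k e x : x != 0 -> gradk_sq k (eval e) x = gradsq k e x.
Proof. by move=> x0; apply: eq_bigr => t _; rewrite Dmulti_eval. Qed.

Lemma gradsq_ge0 k e x : 0 <= gradsq k e x.
Proof. by apply: sumr_ge0 => t _; exact: sqr_ge0. Qed.

Lemma gradsq0 e y : gradsq 0 e y = eval e y ^+ 2.
Proof. by rewrite /gradsq sum_tuple0. Qed.

Lemma gradsq1 e y : gradsq 1 e y = \sum_(j < N) eval (dterm j e) y ^+ 2.
Proof.
rewrite /gradsq (sum_tupleS 0 (fun t => eval (dterms t e) y ^+ 2)).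
by apply: eq_bigr => j _; rewrite sum_tuple0.
Qed.

Definition gradsq_term (k : nat) (e : term) : term :=
  tsum (map (fun t : k.-tuple 'I_N => TMul (dterms t e) (dterms t e)) (index_enum _)).

Lemma eval_gradsq_term k e y : eval (gradsq_term k e) y = gradsq k e y.
Proof. by rewrite eval_tsum big_map; apply: eq_bigr => t _; rewrite /= expr2. Qed.

Lemma gradsqS e k x :
  harmonic e -> x != 0 -> gradsq k.+1 e x = 2^-1 * laplacian (gradsq_term k e) x.
Proof.
move=> He x0; rewrite /gradsq (sum_tupleS k (fun t => eval (dterms t e) x ^+ 2)).
have lap_sq j : eval (dterm j (dterm j (gradsq_term k e))) x =
    \sum_(t : k.-tuple 'I_N) 2 * eval (dterm j (dterms t e)) x ^+ 2 +
    \sum_(t : k.-tuple 'I_N) 2 * (eval (dterms t e) x * eval (dterm j (dterm j (dterms t e))) x).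
  rewrite /gradsq_term !dterm_tsum -!map_comp eval_tsum big_map -big_split.
  by apply: eq_bigr => t _ /=; ring.
rewrite /laplacian; under [in RHS]eq_bigr => j _ do rewrite lap_sq.
have cross0 : \sum_(j < N) \sum_(t : k.-tuple 'I_N)
    2 * (eval (dterms t e) x * eval (dterm j (dterm j (dterms t e))) x) = 0.
  rewrite exchange_big big1 // => t _.
  by rewrite -mulr_sumr -mulr_sumr -/(laplacian _ x) (harmonic_dterms t He x0) !mulr0.
rewrite big_split /= cross0 addr0 mulr_sumr; apply: eq_bigr => j _.
rewrite mulr_sumr; apply: eq_bigr => t _.
by rewrite mulrA mulVf ?mul1r // pnatr_eq0.
Qed.

Lemma gradsq_powS e k c p : harmonic e ->
  eq_off0 (gradsq k e) (fun y => c * sqnorm y `^ p) ->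
  eq_off0 (gradsq k.+1 e) (fun y => c * (p * (N%:R + 2 * p - 2)) * sqnorm y `^ (p - 1)).
Proof.
move=> He Gk x x0.
have Gk_term : eq_off0 (eval (gradsq_term k e)) (eval (TMul (TCst c) (TPow p))).
  by move=> y y0; rewrite eval_gradsq_term Gk.
rewrite gradsqS // /laplacian.
under eq_bigr => j _ do rewrite (dterm_eq_off0 j (dterm_eq_off0 j Gk_term) x0).
by rewrite -/(laplacian _ x) laplacian_scale laplacian_pow //; field.
Qed.

End Terms.

Arguments TCst {R N}.
Arguments TPow {R N}.
Arguments TLog {R N}.

Lemma fallingS (R : realType) (nu : R) k : falling nu k.+1 = nu * falling (nu - 1) k.
Proof.
rewrite /falling big_ord_recl /= subr0; congr (_ * _); apply: eq_bigr => i _.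
by rewrite /bump leq0n natrD mulr1n; ring.
Qed.

Section FundamentalSolution.
Variables (R : realType) (N : nat).
Local Notation s := (- (N%:R - 2) : R).

Lemma gradsq_fundamental k :
  eq_off0 (gradsq k (TPow (s / 2)))
    (fun y : 'rV[R]_N =>
       2 ^+ k * falling (N%:R / 2 + k%:R - 2) k * falling (N%:R + k%:R - 3) k
       * sqnorm y `^ (s - k%:R)).
Proof.
elim: k => [|k IH] y y0.
  rewrite gradsq0 /falling !big_ord0 expr0 !mul1r subr0 /=.
  by rewrite -powR_mulrn ?powR_ge0 // -powRrM; congr (_ `^ _); field.
have shift (a b : R) : a + k.+1%:R - b - 1 = a + k%:R - b by rewrite -natr1; ring.
rewrite (gradsq_powS (@harmonic_fundamental R N) IH y0) !fallingS exprS !shift.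
rewrite -[k.+1%:R]natr1 (_ : s - k%:R - 1 = s - (k%:R + 1)); last by ring.
by congr (_ * _); field.
Qed.

Lemma gamma_fun_fundamental k (x : 'rV[R]_N) : x != 0 ->
  gamma_fun s k x =
    2 ^+ k * falling (N%:R / 2 + k%:R - 2) k * falling (N%:R + k%:R - 3) k.
Proof.
move=> x0; have qx := sqnorm_gt0 x0; rewrite /gamma_fun /gradk_norm.
have -> : (fun y : 'rV[R]_N => enorm y `^ s) = eval (TPow (s / 2)).
  by rewrite funeqE => y; rewrite /= enorm_sqnorm -powRrM mulrC.
rewrite gradk_sq_eval // exprMn sqr_sqrtr ?gradsq_ge0 //.
rewrite (gradsq_fundamental k x0); set c := 2 ^+ k * _ * _.
rewrite enorm_sqnorm -powRrM -powR_mulrn ?powR_ge0 //.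
rewrite -powRrM mulrCA -powRD; last by apply/implyP => _; rewrite gt_eqF.
by rewrite (_ : 2^-1 * _ * 2 + _ = 0) ?powRr0 ?mulr1 //; field.
Qed.

End FundamentalSolution.

Section LogPotential.
Variable R : realType.

Lemma gradsq_log n :
  eq_off0 (gradsq n.+1 (TMul (TCst (2^-1)) TLog))
    (fun y : 'rV[R]_2 => 2 ^+ n * (n`!)%:R ^+ 2 * sqnorm y `^ (- n.+1%:R)).
Proof.
have harmonic_log : harmonic (TMul (TCst (2^-1)) TLog : term R 2).
  by move=> y y0; rewrite laplacian_scale laplacian_log //; ring.
elim: n => [|n IH] y y0.
  have qy := sqnorm_gt0 y0.
  rewrite gradsq1 /= powR_inv1 ?sqnorm_ge0 // expr0 mul1r expr1n mul1r.
  rewrite (eq_bigr (fun j => y ord0 j ^+ 2 / sqnorm y ^+ 2)) => [|j _].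
    by rewrite -mulr_suml -/(sqnorm y); field; rewrite gt_eqF.
  by field; rewrite gt_eqF.
rewrite (gradsq_powS harmonic_log IH y0) factS natrM [2 ^+ n.+1]exprS.
rewrite (_ : - n.+1%:R - 1 = - n.+2%:R); last by rewrite -(natr1 n.+1); ring.
by congr (_ * _); rewrite -(natr1 n); ring.
Qed.

Lemma ell_fun_log n (x : 'rV[R]_2) : x != 0 -> ell_fun n.+1 x = 2 ^+ n * (n`!)%:R ^+ 2.
Proof.
move=> x0; have qx := sqnorm_gt0 x0; rewrite /ell_fun /gradk_norm.
have -> : (fun y : 'rV[R]_2 => ln (enorm y)) = eval (TMul (TCst (2^-1)) TLog).
  by rewrite funeqE => y; rewrite /= enorm_sqnorm ln_powR.
rewrite gradk_sq_eval // exprMn sqr_sqrtr ?gradsq_ge0 // (gradsq_log n x0).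
rewrite exprAC /enorm sqr_sqrtr ?sqnorm_ge0 // -/(sqnorm x) powR_invn ?sqnorm_ge0 //.
by rewrite mulrCA mulfV ?mulr1 // expf_neq0 // gt_eqF.
Qed.

End LogPotential.

Theorem theorem1p3 (R : realType) :
  (forall (N k : nat), (0 < N)%N ->
     forall x : 'rV[R]_N, x != 0 ->
       gamma_fun (- (N%:R - 2)) k x =
         2 ^+ k * falling (N%:R / 2 + k%:R - 2) k * falling (N%:R + k%:R - 3) k)
  /\
  (forall k : nat, (0 < k)%N ->
     forall x : 'rV[R]_2, x != 0 ->
       ell_fun k x = 2 ^+ k.-1 * ((k.-1)`!)%:R ^+ 2).
Proof.
split=> [N k _ x x0 | [//|n] _ x x0]; first exact: gamma_fun_fundamental.
exact: ell_fun_log.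
Qed.
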